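(* Let $\sigma$ be a vocabulary, $\mathcal C$ a class of constraints over a specification $\langle V,D\rangle$ with $D\subseteq\mathbb R$, $\gamma:\sigma_c\to\mathcal C$ a denotation, and $P'$ a CAS program over $\sigma,\mathcal C,\gamma$. Let $P$ be $P'$ extended with a minimize statement $\$minimize\{b_1 x_1+c_1@l_1,\dots,b_n x_n+c_n@l_n\}$ (integers $b_i,c_i$, variables $x_i\in V$, positive integer levels $l_i$, and $x_i\neq x_j$ whenever $i\neq j$ and $l_i=l_j$). Let $S$ be the set of ew-conditions $\{(T,w_l@l),\ (T,0;\vec c_l@l) : l\in\{l_1,\dots,l_n\}\}$, where $T=T_{\sigma,V,D}$, $w_l=\sum_{i:l_i=l}c_i$, and $\vec c_l:V\to\mathbb Z$ maps $x_i$ to $b_i$ for each $i$ with $l_i=l$ and every other variable to $0$. Then for every $(X,\nu)\in\mathit{Int}(\sigma,V,D)$: $(X,\nu)$ is a min-optimal extended model of the ew-system $(P',S)$ (with $P'$ viewed as an e-module of the CAS-logic over $\sigma,\mathcal C,\gamma$) if and only if $(X,\nu)$ is an optimal extended answer set of $P$.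
   Context: Standing definitions. A vocabulary is a set of atoms; an interpretation over a vocabulary $\sigma$ is a subset of $\sigma$. For a set $V$ of variables and a set $D$ of values, an evaluation is a function $\nu:V\to D$. An extended interpretation over $\sigma,V,D$ is a pair $(I,\nu)$ with $I\subseteq\sigma$ and $\nu:V\to D$; $\mathit{Int}(\sigma,V,D)$ denotes the set of all of them. For an interpretation $I$ and a vocabulary $\sigma'$, $I_{|\sigma'}=I\cap\sigma'$; for an evaluation $\nu$ defined on a superset of $V'$, $\nu_{|V'}$ is its restriction to $V'$. An extended logic (e-logic) is a tuple $(L,\sigma,\Delta,\Upsilon,\mathit{sem})$ where $L$ is a set (of formulas), $\sigma$ a vocabulary, $\Delta$ a set of values (the domain), $\Upsilon$ a set of variables, and $\mathit{sem}$ assigns to every subset $T\subseteq L$ a set $\mathit{sem}(T)\subseteq\mathit{Int}(\sigma,\Upsilon,\Delta)$. A subset $T\subseteq L$ is called an e-module (theory) of this e-logic; $\sigma_T,\Delta_T,\Upsilon_T,\mathit{sem}_T$ denote the corresponding components of its e-logic. For an extended interpretation $(I,\nu)$ over $\sigma,V,D$ with $\sigma_T\subseteq\sigma$, $\Upsilon_T\subseteq V$, $\Delta_T\subseteq D$: $(I,\nu)$ is an extended model of $T$, written $(I,\nu)\models T$, iff $(I_{|\sigma_T},\nu_{|\Upsilon_T})\in\mathit{sem}_T$; $I$ is a model of $T$ iff $(I,\nu)\models T$ for some such $\nu$. Two e-modules are coherent if their domains are equal whenever their variable sets intersect. An EAMS $\mathcal H$ is a set of pairwise coherent e-modules (possibly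 of different e-logics); $\sigma_{\mathcal H},\Upsilon_{\mathcal H},\Delta_{\mathcal H}$ are the unions of the vocabularies, variable sets and domains of its modules. An element $(I,\nu)\in\mathit{Int}(\sigma_{\mathcal H},\Upsilon_{\mathcal H},\Delta_{\mathcal H})$ is an extended model of $\mathcal H$ iff it is an extended model of every module of $\mathcal H$; $I$ is a model of $\mathcal H$ iff $(I,\nu)$ is an extended model of $\mathcal H$ for some $\nu$. A single e-module $T$ is identified with the EAMS $\{T\}$. An ew-condition is $B=(T,w;\vec c@l)$ with $T$ an e-module, $w\in\mathbb Z$ (weight), $\vec c:\Upsilon_T\to\mathbb R$ (coefficients function), and $l$ a positive integer (level); $\sigma_B=\sigma_T$, $\Upsilon_B=\Upsilon_T$, $\Delta_B=\Delta_T$. The notation $(T,w@l)$ denotes an ew-condition whose coefficients function is empty or identically $0$. $(I,\nu)\models B$ iff $(I,\nu)\models T$, and $I\models B$ iff $I$ is a model of $T$. Costs: $[(I,\nu)\models B]=\sum_{x\in\Upsilon_B}\nu(x)\vec c(x)$ if $(I,\nu)\models B$ and $0$ otherwise (this is $0$ when $\vec c\equiv0$; otherwise domains are taken to be sets of reals and the sum finite); $[I\models B]=w$ if $I\models B$ and $0$ otherwise. An ew-condition $(T,w;\vec c@l)$ is coherent with an EAMS $\mathcal H$ if $\sigma_T\subseteq\sigma_{\mathcal H}$, $\Upsilon_T\subseteq\Upsilon_{\mathcal H}$, and $\Delta_T=\Delta_H$ for every module $H\in\mathcal H$ with $\Upsilon_T\cap\Upsilon_H\neq\emptyset$. An ew-system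 is a pair $\mathcal W=(\mathcal H,\mathcal Z)$ with $\mathcal H$ an EAMS and $\mathcal Z$ a finite set of ew-conditions each coherent with $\mathcal H$; $\sigma_{\mathcal W}=\sigma_{\mathcal H}$, $\Upsilon_{\mathcal W}=\Upsilon_{\mathcal H}$, $\Delta_{\mathcal W}=\Delta_{\mathcal H}$, and the (extended) models of $\mathcal W$ are the (extended) models of $\mathcal H$. $\mathcal W_l$ is the set of ew-conditions in $\mathcal Z$ of level $l$; $\mathrm{Lev}(\mathcal W)$ is the set of levels of ew-conditions in $\mathcal Z$; for a non-greatest $l\in\mathrm{Lev}(\mathcal W)$, $l^{+}$ is the least element of $\mathrm{Lev}(\mathcal W)$ greater than $l$. Optimality. For a model $I$ of $\mathcal W$ let $\mathrm{cost}_l(I)=\sum_{B\in\mathcal W_l}[I\models B]$, and for an extended model $(I,\nu)$ let $\mathrm{ecost}_l(I,\nu)=\sum_{B\in\mathcal W_l}([I\models B]+[(I,\nu)\models B])$. Recursively downward over $l\in\mathrm{Lev}(\mathcal W)$: a model $I^*$ of $\mathcal W$ is $l$-optimal if $I^*\in R_l$ and $\mathrm{cost}_l(I^* )\ge\mathrm{cost}_l(I)$ for all $I\in R_l$, where $R_l$ is the set of all models of $\mathcal W$ if $l$ is the greatest level and the set of $l^+$-optimal models otherwise; $l$-min-optimal is defined the same way with $\le$ and with $R_l$ built from $l^+$-min-optimal models. A model is optimal (min-optimal) if it is $l$-optimal ($l$-min-optimal) for every $l\in\mathrm{Lev}(\mathcal W)$. Optimal, min-optimal, $l$-optimal and $l$-min-optimal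 extended models are defined identically using extended models and $\mathrm{ecost}_l$ in place of models and $\mathrm{cost}_l$. Logic programs. A rule over $\sigma$ has the form $a_0\leftarrow a_1,\dots,a_\ell,not\ a_{\ell+1},\dots,not\ a_m$ with each $a_i\in\sigma$ ($1\le i\le m$) and $a_0\in\sigma$ or $a_0=\bot$ (empty head). A program is a set of rules; $hd(\Pi)$ is the set of non-empty heads. A set $X$ of atoms satisfies the rule if it classically satisfies $a_1\wedge\dots\wedge a_\ell\wedge\neg a_{\ell+1}\wedge\dots\wedge\neg a_m\to a_0$ ($\bot$ being false). The reduct $\Pi^X$ is obtained by deleting every rule for which $X$ does not satisfy $\neg a_{\ell+1}\wedge\dots\wedge\neg a_m$ and replacing each remaining rule by $a_0\leftarrow a_1,\dots,a_\ell$. $X$ is an answer set of $\Pi$ if $X$ is a $\subseteq$-minimal set satisfying all rules of $\Pi^X$. $X$ is an input answer set of $\Pi$ if $X$ is an answer set of $\Pi\cup\{a\leftarrow\ : a\in X\setminus hd(\Pi)\}$. Constraints. A constraint over a specification $\langle V,D\rangle$ is $\langle t,R\rangle$ with $t=(x_1,\dots,x_k)$ a tuple of variables from $V$ and $R\subseteq D^k$; its complement $\overline{\langle t,R\rangle}$ is $\langle t,D^k\setminus R\rangle$; $\nu:V\to D$ satisfies it if $(\nu(x_1),\dots,\nu(x_k))\in R$ and solves a set of constraints if it satisfies each. A class $\mathcal C$ of constraints is a set of constraints over one specification. A vocabulary $\sigma$ is partitioned into regular atoms $\sigma_r$ and constraint atoms $\sigma_c$; a denotation is a function $\gamma:\sigma_c\to\mathcal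 C$. CAS programs. A CAS program over $\sigma,\mathcal C,\gamma$ is a set of rules over $\sigma$ whose heads are in $\sigma_r$ or are $\bot$. $At(P)$ is the set of atoms occurring in $P$, $At(P)_r=At(P)\cap\sigma_r$, $At(P)_c=At(P)\cap\sigma_c$. A set $X\subseteq At(P)$ is an answer set of $P$ if $X\cap At(P)_r\subseteq hd(P)$, $X$ is an input answer set of $P$, and the CSP $K(X)=\{\gamma(a):a\in X\cap At(P)_c\}\cup\{\overline{\gamma(a)}:a\in At(P)_c\setminus X\}$ has a solution; $(X,\nu)$ is an extended answer set of $P$ if $X$ is an answer set and $\nu:V\to D$ solves $K(X)$. The CAS-logic over $\sigma,\mathcal C,\gamma$ is the e-logic $(L,\sigma,D,V,\mathit{sem})$ with $L$ the set of CAS rules over $\sigma$ and $\mathit{sem}(P)$ the set of extended answer sets of $P$. $T_{\sigma,V,D}$ denotes an e-module (of any e-logic) with vocabulary $\sigma$, variables $V$, domain $D$ and $\mathit{sem}(T_{\sigma,V,D})=\mathit{Int}(\sigma,V,D)$. Minimize statements. The extended answer sets of $P$ ($P'$ plus the minimize statement) are those of $P'$. For an evaluation $\nu$ and level $l$ let $\Sigma^\nu_l=\sum_{i:l_i=l}(b_i\nu(x_i)+c_i)$. An extended answer set $(X',\nu')$ of $P$ dominates an extended answer set $(X,\nu)$ of $P$ if there is $l\in\{l_1,\dots,l_n\}$ such that $\Sigma^\nu_{l'}=\Sigma^{\nu'}_{l'}$ for every $l'\in\{l_1,\dots,l_n\}$ with $l'>l$, and $\Sigma^{\nu'}_l<\Sigma^\nu_l$.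 An extended answer set of $P$ is optimal if no extended answer set of $P$ dominates it. *)

From HB Require Import structures.
From mathcomp Require Import all_boot all_order all_algebra.
From mathcomp Require Import boolp classical_sets fsbigop.
From mathcomp Require Import Rstruct.
From Stdlib Require Rdefinitions.

Set Implicit Arguments.
Unset Strict Implicit.
Unset Printing Implicit Defensive.
Import Order.TTheory GRing.Theory Num.Theory.
Local Open Scope classical_set_scope.
Local Open Scope ring_scope.

Notation real := Rdefinitions.R.

Section General.
(* Atom : the universe of atoms (vocabularies are subsets of it);
   Var  : the universe of variables (variable sets are subsets of it). *)
Variables (Atom : Type) (Var : choiceType).

(* An evaluation nu : V -> D is encoded as a partial map Var -> option real
   which is defined exactly on V and takes values in D. *)
Definition evaluation := Var -> option real.

Definition is_eval (V : set Var) (D : set real) (nu : evaluation) : Prop :=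
  forall x, (V x -> exists d, D d /\ nu x = Some d) /\ (~ V x -> nu x = None).

Definition restrict (nu : evaluation) (V' : set Var) : evaluation :=
  fun x => if `[< V' x >] then nu x else None.

Definition Int (sigma : set Atom) (V : set Var) (D : set real)
  (I : set Atom) (nu : evaluation) : Prop :=
  I `<=` sigma /\ is_eval V D nu.

Record elogic := ELogic {
  fml : Type;
  e_L : set fml;
  e_voc : set Atom;
  e_dom : set real;
  e_vars : set Var;
  e_sem : set fml -> set Atom -> evaluation -> Prop
}.

Record emodule := EModule { em_logic : elogic; em_th : set (fml em_logic) }.

Definition voc (T : emodule) := e_voc (em_logic T).
Definition vars (T : emodule) := e_vars (em_logic T).
Definition dom (T : emodule) := e_dom (em_logic T).
Definition sem (T : emodule) := @e_sem (em_logic T) (@em_th T).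

Definition emodel (T : emodule) (I : set Atom) (nu : evaluation) : Prop :=
  sem T (I `&` voc T) (restrict nu (vars T)).

Definition imodel (T : emodule) (I : set Atom) : Prop :=
  exists (V : set Var) (D : set real) (nu : evaluation),
    [/\ vars T `<=` V, dom T `<=` D, is_eval V D nu & emodel T I nu].

(* EAMS, represented by the (finite) list of its modules *)
Definition eams := seq emodule.

Definition coherent (T1 T2 : emodule) : Prop :=
  (exists x, vars T1 x /\ vars T2 x) -> dom T1 = dom T2.

Definition is_eams (H : eams) : Prop :=
  forall T1 T2, List.In T1 H -> List.In T2 H -> coherent T1 T2.

Definition voc_H (H : eams) : set Atom := fun a => exists T, List.In T H /\ voc T a.
Definition vars_H (H : eams) : set Var := fun x => exists T, List.In T H /\ vars T x.
Definition dom_H (H : eams) : set real := fun d => exists T, List.In T H /\ dom T d.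

Definition emodel_H (H : eams) (I : set Atom) (nu : evaluation) : Prop :=
  Int (voc_H H) (vars_H H) (dom_H H) I nu /\
  forall T, List.In T H -> emodel T I nu.

(* ew-conditions (T, w; c @ l).  The coefficients function is given as a
   function on all variables, of which only the values on Upsilon_T matter. *)
Record ewcond := EWCond {
  ew_mod : emodule;
  ew_w : int;
  ew_c : Var -> real;
  ew_lev : nat
}.

Definition ecost_cond (B : ewcond) (I : set Atom) (nu : evaluation) : real :=
  if `[< emodel (ew_mod B) I nu >] then
    \sum_(x \in vars (ew_mod B)) (odflt 0 (nu x) * ew_c B x)
  else 0.

Definition cost_cond (B : ewcond) (I : set Atom) : real :=
  if `[< imodel (ew_mod B) I >] then (ew_w B)%:~R else 0.

Definition coherent_cond (H : eams) (B : ewcond) : Prop :=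
  [/\ voc (ew_mod B) `<=` voc_H H, vars (ew_mod B) `<=` vars_H H &
      forall T, List.In T H ->
        (exists x, vars (ew_mod B) x /\ vars T x) -> dom (ew_mod B) = dom T].

(* ew-systems (H, Z); the finite set Z is given as a list *)
Record ewsystem := EWSystem { ews_H : eams; ews_Z : seq ewcond }.

Definition is_ewsystem (W : ewsystem) : Prop :=
  is_eams (ews_H W) /\ forall B, List.In B (ews_Z W) -> coherent_cond (ews_H W) B.

Definition levels (W : ewsystem) : seq nat :=
  sort geq (undup [seq ew_lev B | B <- ews_Z W]).

Definition ecost (W : ewsystem) (l : nat) (I : set Atom) (nu : evaluation) : real :=
  \sum_(B <- ews_Z W | ew_lev B == l) (cost_cond B I + ecost_cond B I nu).

Definition emodel_W (W : ewsystem) (I : set Atom) (nu : evaluation) : Prop :=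
  emodel_H (ews_H W) I nu.

Definition argmin_set (f : set Atom -> evaluation -> real)
  (S : set Atom -> evaluation -> Prop) : set Atom -> evaluation -> Prop :=
  fun I nu => S I nu /\ forall I' nu', S I' nu' -> f I nu <= f I' nu'.

Fixpoint minimize_levels (W : ewsystem) (ls : seq nat)
  (S : set Atom -> evaluation -> Prop) : set Atom -> evaluation -> Prop :=
  match ls with
  | [::] => S
  | l :: ls' => minimize_levels W ls' (argmin_set (ecost W l) S)
  end.

(* R_l: all extended models if l is the greatest level, otherwise the
   l^+-min-optimal extended models *)
Definition R_level (W : ewsystem) (l : nat) : set Atom -> evaluation -> Prop :=
  minimize_levels W [seq l' <- levels W | (l < l')%N] (emodel_W W).

Definition lminopt_ext (W : ewsystem) (l : nat) (I : set Atom) (nu : evaluation) :=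
  argmin_set (ecost W l) (R_level W l) I nu.

Definition minopt_ext (W : ewsystem) (I : set Atom) (nu : evaluation) : Prop :=
  emodel_W W I nu /\ forall l, l \in levels W -> lminopt_ext W l I nu.

(* a0 <- a1,...,al, not a(l+1),...,not am ; head None stands for bottom *)
Record rule := Rule { r_head : option Atom; r_pos : seq Atom; r_neg : seq Atom }.

Definition rule_over (sigma : set Atom) (r : rule) : Prop :=
  (forall a, r_head r = Some a -> sigma a) /\
  (forall a, List.In a (r_pos r) -> sigma a) /\
  (forall a, List.In a (r_neg r) -> sigma a).

Definition program := set rule.

Definition hd (P : program) : set Atom := fun a => exists r, P r /\ r_head r = Some a.

Definition At (P : program) : set Atom :=
  fun a => exists r, P r /\
    (r_head r = Some a \/ List.In a (r_pos r) \/ List.In a (r_neg r)).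

Definition sat_rule (X : set Atom) (r : rule) : Prop :=
  (forall a, List.In a (r_pos r) -> X a) ->
  (forall a, List.In a (r_neg r) -> ~ X a) ->
  match r_head r with Some a => X a | None => False end.

Definition sat_prog (X : set Atom) (P : program) : Prop := forall r, P r -> sat_rule X r.

Definition reduct (P : program) (X : set Atom) : program :=
  fun r' => exists r, [/\ P r, (forall a, List.In a (r_neg r) -> ~ X a) &
                         r' = Rule (r_head r) (r_pos r) [::]].

Definition answer_set (P : program) (X : set Atom) : Prop :=
  sat_prog X (reduct P X) /\
  forall Y, Y `<=` X -> sat_prog Y (reduct P X) -> Y = X.

Definition input_answer_set (P : program) (X : set Atom) : Prop :=
  answer_set (P `|` [set r | exists a, [/\ X a, ~ hd P a & r = Rule (Some a) [::] [::]]]) X.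

(* <t, R> with t = (x1,...,xk) and R a k-ary relation (as a set of lists) *)
Record constraint := Constraint { c_vars : seq Var; c_rel : set (seq real) }.

Definition constraint_over (V : set Var) (D : set real) (c : constraint) : Prop :=
  (forall x, List.In x (c_vars c) -> V x) /\
  (forall s, c_rel c s -> size s = size (c_vars c) /\ forall d, List.In d s -> D d).

Definition complement (D : set real) (c : constraint) : constraint :=
  Constraint (c_vars c)
    (fun s => [/\ size s = size (c_vars c), (forall d, List.In d s -> D d) & ~ c_rel c s]).

Definition sat_constraint (nu : evaluation) (c : constraint) : Prop :=
  exists s, map nu (c_vars c) = map Some s /\ c_rel c s.

Definition solves (nu : evaluation) (K : set constraint) : Prop :=
  forall c, K c -> sat_constraint nu c.

Definition class_over (V : set Var) (D : set real) (C : set constraint) : Prop :=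
  forall c, C c -> constraint_over V D c.

Definition denotation (sigmac : set Atom) (C : set constraint) (gamma : Atom -> constraint) :=
  forall a, sigmac a -> C (gamma a).

Definition cas_program (sigma sigmac : set Atom) (P : program) : Prop :=
  forall r, P r -> rule_over sigma r /\
    (forall a, r_head r = Some a -> sigma a /\ ~ sigmac a).

Section CAS.
Variables (sigma sigmac : set Atom) (V : set Var) (D : set real)
  (C : set constraint) (gamma : Atom -> constraint).

Definition K (P : program) (X : set Atom) : set constraint :=
  fun c => (exists a, [/\ X a, At P a, sigmac a & c = gamma a]) \/
           (exists a, [/\ At P a, sigmac a, ~ X a & c = complement D (gamma a)]).

Definition cas_answer_set (P : program) (X : set Atom) : Prop :=
  [/\ X `<=` At P,
      X `&` (At P `&` (sigma `\` sigmac)) `<=` hd P,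
      input_answer_set P X &
      exists nu, is_eval V D nu /\ solves nu (K P X)].

Definition cas_ext_answer_set (P : program) (X : set Atom) (nu : evaluation) : Prop :=
  [/\ cas_answer_set P X, is_eval V D nu & solves nu (K P X)].

Definition cas_logic : elogic :=
  @ELogic rule (fun r => rule_over sigma r /\
                   forall a, r_head r = Some a -> sigma a /\ ~ sigmac a)
    sigma D V (fun P I nu => cas_ext_answer_set P I nu).

Definition cas_module (P : program) : emodule := @EModule cas_logic P.

Record min_elem := MinElem { m_b : int; m_x : Var; m_c : int; m_l : nat }.

Definition min_wf (ms : seq min_elem) : Prop :=
  (forall m, List.In m ms -> V (m_x m) /\ (0 < m_l m)%N) /\
  (forall i j mi mj, i <> j -> List.nth_error ms i = Some mi ->
     List.nth_error ms j = Some mj -> m_l mi = m_l mj -> m_x mi <> m_x mj).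

Definition Sigma (ms : seq min_elem) (nu : evaluation) (l : nat) : real :=
  \sum_(m <- ms | m_l m == l) ((m_b m)%:~R * odflt 0 (nu (m_x m)) + (m_c m)%:~R).

(* extended answer sets of P = P' + minimize statement are those of P' *)
Definition min_ext_answer_set (P' : program) (ms : seq min_elem) (X : set Atom) (nu : evaluation) :=
  cas_ext_answer_set P' X nu.

Definition dominates (ms : seq min_elem) (nu' nu : evaluation) : Prop :=
  exists l, [/\ l \in [seq m_l m | m <- ms],
    (forall l', l' \in [seq m_l m | m <- ms] -> (l < l')%N -> Sigma ms nu l' = Sigma ms nu' l') &
    Sigma ms nu' l < Sigma ms nu l].

Definition optimal_ext_answer_set (P' : program) (ms : seq min_elem) (X : set Atom) (nu : evaluation) : Prop :=
  min_ext_answer_set P' ms X nu /\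
  ~ exists X' nu', min_ext_answer_set P' ms X' nu' /\ dominates ms nu' nu.

Definition trivial_logic : elogic :=
  @ELogic unit setT sigma D V (fun _ I nu => Int sigma V D I nu).
Definition T_sVD : emodule := @EModule trivial_logic set0.

Definition w_lev (ms : seq min_elem) (l : nat) : int :=
  \sum_(m <- ms | m_l m == l) m_c m.
Definition c_lev (ms : seq min_elem) (l : nat) : Var -> real :=
  fun x => \sum_(m <- ms | (m_l m == l) && `[< m_x m = x >]) (m_b m)%:~R.

Definition S_of (ms : seq min_elem) : seq ewcond :=
  flatten [seq [:: EWCond T_sVD (w_lev ms l) (fun _ => 0) l;
                   EWCond T_sVD 0 (c_lev ms l) l]
          | l <- undup [seq m_l m | m <- ms]].

Definition W_of (P' : program) (ms : seq min_elem) : ewsystem :=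
  EWSystem [:: cas_module P'] (S_of ms).
End CAS.
End General.

From mathcomp Require Import all_boot all_order all_algebra.
From mathcomp Require Import boolp classical_sets fsbigop Rstruct.
From mathcomp Require Import lra.

Set Implicit Arguments.
Unset Strict Implicit.
Unset Printing Implicit Defensive.
Import Order.TTheory GRing.Theory Num.Theory.
Local Open Scope classical_set_scope.
Local Open Scope ring_scope.

(* On an extended model of (P', S) every condition of S is satisfied, so the
   level-l cost of (X, nu) is w_l + sum_x nu(x) c_l(x), which regroups into
   Sigma^nu_l.  Minimizing these costs successively from the greatest level
   down selects exactly the minima of the lexicographic order on cost profiles,
   and being lexicographically below (X, nu) is exactly dominating it. *)

Section LexicographicOrder.
Variables (R : realDomainType) (A B : Type) (f : nat -> A -> B -> R).

Fixpoint lex_lt (ls : seq nat) (a' : A) (b' : B) (a : A) (b : B) : Prop :=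
  if ls is l :: ls then
    f l a' b' < f l a b \/ (f l a' b' = f l a b /\ lex_lt ls a' b' a b)
  else False.

Lemma lex_lt_agree ls a1 b1 a2 b2 a b :
  (forall l, l \in ls -> f l a1 b1 = f l a2 b2) ->
  lex_lt ls a b a1 b1 -> lex_lt ls a b a2 b2.
Proof.
elim: ls => [|l ls IH] //= eq12; rewrite eq12 ?mem_head //.
case=> [lt_l|[eq_l lex_ls]]; [by left | right; split=> //; apply: IH lex_ls].
by move=> l' ls_l'; apply: eq12; rewrite inE ls_l' orbT.
Qed.

Lemma lex_lt_total ls a1 b1 a2 b2 :
  [\/ lex_lt ls a1 b1 a2 b2, lex_lt ls a2 b2 a1 b1 |
      forall l, l \in ls -> f l a1 b1 = f l a2 b2].
Proof.
elim: ls => [|l ls IH] /=; first by apply: Or33.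
case: (ltgtP (f l a1 b1) (f l a2 b2)) => [lt12|lt21|eq12].
- by apply: Or31; left.
- by apply: Or32; left.
case: IH => [lex12|lex21|agree].
- by apply: Or31; right.
- by apply: Or32; right.
by apply: Or33 => l'; rewrite inE => /orP[/eqP->|/agree].
Qed.

Lemma lex_ltP ls a' b' a b : sorted geq ls ->
  lex_lt ls a' b' a b <->
  exists l, [/\ l \in ls,
    forall l', l' \in ls -> (l < l')%N -> f l' a' b' = f l' a b &
    f l a' b' < f l a b].
Proof.
elim: ls => [|x ls IH] /= sorted_ls; first by split=> // -[? []].
have below_x : all (geq x) ls.
  by apply: order_path_min sorted_ls => y z w zy wz; apply: leq_trans wz zy.
rewrite IH ?(path_sorted sorted_ls) //; split.
- case=> [lt_x|[eq_x [l [ls_l agree lt_l]]]].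
    exists x; split=> //; first exact: mem_head.
    move=> l'; rewrite inE => /orP[/eqP->|ls_l']; first by rewrite ltnn.
    by move=> lt_x_l'; have := allP below_x _ ls_l'; rewrite /= leqNgt lt_x_l'.
  exists l; split=> [||//]; first by rewrite inE ls_l orbT.
  by move=> l'; rewrite inE => /orP[/eqP->|/agree].
- move=> [l [+ agree lt_l]]; rewrite inE => /orP[/eqP eq_l|ls_l].
    by left; rewrite -eq_l.
  have [eq_lx|ne_lx] := eqVneq l x; first by left; rewrite -eq_lx.
  have lt_lx : (l < x)%N by rewrite ltn_neqAle ne_lx; apply: (allP below_x).
  right; split; first by apply: agree; rewrite ?mem_head.
  exists l; split=> // l' ls_l'; apply: agree.
  by rewrite inE ls_l' orbT.
Qed.

Lemma lex_lt_above ls l a' b' a b : sorted geq ls ->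
  lex_lt [seq l' <- ls | (l < l')%N] a' b' a b \/
  [/\ l \in ls, forall l', l' \in [seq l' <- ls | (l < l')%N] ->
                  f l' a' b' = f l' a b & f l a' b' < f l a b] ->
  lex_lt ls a' b' a b.
Proof.
move=> sorted_ls; have sorted_above : sorted geq [seq l' <- ls | (l < l')%N].
  by apply: sorted_filter sorted_ls => x y z yx zy; apply: leq_trans zy yx.
rewrite lex_ltP // lex_ltP //; case=> [[l0 [+ agree lt_l0]]|[ls_l agree lt_l]].
  rewrite mem_filter => /andP[lt_l_l0 ls_l0]; exists l0; split=> // l' ls_l' lt'.
  by apply: agree; rewrite // mem_filter ls_l' (ltn_trans lt_l_l0 lt').
exists l; split=> // l' ls_l' lt'.
by apply: agree; rewrite mem_filter lt' ls_l'.
Qed.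

End LexicographicOrder.

Arguments lex_ltP {R A B f ls a' b' a b}.

Lemma eq_lex_lt (R : realDomainType) (A B : Type) (f g : nat -> A -> B -> R)
    ls a' b' a b :
  (forall l, f l a' b' = g l a' b') -> (forall l, f l a b = g l a b) ->
  lex_lt f ls a' b' a b <-> lex_lt g ls a' b' a b.
Proof. by move=> fg' fg; elim: ls => //= l ls ->; rewrite fg' fg. Qed.

Section LevelwiseMinimization.
Variables (Atom : Type) (Var : choiceType).
Implicit Types (S : set Atom -> evaluation Var -> Prop)
  (f : nat -> set Atom -> evaluation Var -> real).

Definition lex_minimal f ls S I nu :=
  S I nu /\ forall I' nu', S I' nu' -> ~ lex_lt f ls I' nu' I nu.

Lemma minimize_levelsP W ls S I nu :
  minimize_levels W ls S I nu <-> lex_minimal (ecost W) ls S I nu.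
Proof.
elim: ls S I nu => [|l ls IH] S I nu /=.
  by split=> [SI|[]//]; split=> // ? ? _ [].
rewrite IH; split.
- move=> [[SI min_l] min_ls]; split=> // I' nu' SI' [lt_l|[eq_l lex_ls]].
    by have := min_l _ _ SI'; lra.
  apply: (min_ls I' nu') => //; split=> // I2 nu2 SI2; rewrite eq_l.
  exact: min_l.
- move=> [SI min]; split.
    split=> // I' nu' SI'; rewrite leNgt; apply/negP => lt_l.
    by apply: (min _ _ SI'); left.
  move=> I' nu' [SI' min_l'] lex_ls; apply: (min _ _ SI'); right; split=> //.
  have := min_l' _ _ SI.
  have : ~ ecost W l I' nu' < ecost W l I nu by move=> lt_l; apply: (min _ _ SI'); left.
  lra.
Qed.

Lemma levelwise_minimalP f ls S I nu : sorted geq ls ->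
  S I nu /\ (forall l, l \in ls ->
    argmin_set (f l) (lex_minimal f [seq l' <- ls | (l < l')%N] S) I nu) <->
  lex_minimal f ls S I nu.
Proof.
move=> sorted_ls; split.
- move=> [SI min] ; split=> // I' nu' SI' /(lex_ltP sorted_ls) [l [ls_l agree lt_l]].
  have [[_ lexmin_above] min_l] := min l ls_l.
  suff /min_l : lex_minimal f [seq l' <- ls | (l < l')%N] S I' nu' by lra.
  have agree_above l' : l' \in [seq l' <- ls | (l < l')%N] -> f l' I' nu' = f l' I nu.
    by rewrite mem_filter => /andP[lt' ls_l']; apply: agree.
  split=> // I2 nu2 SI2 lex2; apply: (lexmin_above _ _ SI2).
  exact: lex_lt_agree agree_above lex2.
- move=> [SI lexmin]; split=> // l ls_l.
  have lexmin_above : lex_minimal f [seq l' <- ls | (l < l')%N] S I nu.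
    split=> // I' nu' SI' lex_above; apply: (lexmin _ _ SI').
    by apply: (lex_lt_above (l := l) sorted_ls); left.
  split=> // I' nu' [SI' lexmin']; rewrite leNgt; apply/negP => lt_l.
  case: (lex_lt_total f [seq l' <- ls | (l < l')%N] I' nu' I nu).
  - exact: lexmin_above.2.
  - exact: lexmin' _ _ SI.
  - move=> agree; apply: (lexmin _ _ SI').
    by apply: (lex_lt_above (l := l) sorted_ls); right.
Qed.

Lemma minopt_ext_lexP W I nu :
  minopt_ext W I nu <-> lex_minimal (ecost W) (levels W) (emodel_W W) I nu.
Proof.
have sorted_levels : sorted geq (levels W).
  by apply: sort_sorted => m n; apply: leq_total.
rewrite -levelwise_minimalP // /minopt_ext /lminopt_ext /argmin_set /R_level.
by setoid_rewrite minimize_levelsP.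
Qed.

End LevelwiseMinimization.

Lemma In_mapP (T : Type) (U : eqType) (f : T -> U) (r : seq T) (u : U) :
  reflect (exists2 t, List.In t r & u = f t) (u \in map f r).
Proof.
elim: r => [|t r IH] /=; first by right; case.
rewrite inE; apply: (iffP orP) => [[/eqP->|/IH[t' rt' ->]]|[t' [<-|rt'] u_t']].
- by exists t; [left|].
- by exists t'; [right|].
- by left; apply/eqP.
- by right; apply/IH; exists t'.
Qed.

Lemma eq_bigr_In (R : Type) (idx : R) (op : R -> R -> R) (T : Type)
    (r : seq T) (P : pred T) (F G : T -> R) :
  (forall t, List.In t r -> P t -> F t = G t) ->
  \big[op/idx]_(t <- r | P t) F t = \big[op/idx]_(t <- r | P t) G t.
Proof.
elim: r => [|t r IH] FG; first by rewrite !big_nil.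
rewrite !big_cons IH => [|t' rt']; last by apply: FG; right.
by case: ifP => // Pt; rewrite FG //; left.
Qed.

Lemma fsum_mul_occurrences (Var : choiceType) (T : Type) (A : set Var)
    (r : seq T) (P : pred T) (xt : T -> Var) (b : T -> real) (F : Var -> real) :
  (forall t, List.In t r -> A (xt t)) ->
  \sum_(x \in A) F x * \sum_(t <- r | P t && `[< xt t = x >]) b t =
  \sum_(t <- r | P t) b t * F (xt t).
Proof.
move=> rA; pose s := undup (map xt r).
have s_xt t : List.In t r -> xt t \in s.
  by move=> rt; rewrite mem_undup; apply/In_mapP; exists t.
have sA x : x \in s -> A x by rewrite mem_undup => /In_mapP[t rt ->]; apply: rA.
rewrite (fsbigE s) ?undup_uniq //; first last.
- move=> x _ xs; rewrite big_mkcond (@eq_bigr_In _ _ _ _ _ _ _ (fun=> 0)).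
    by rewrite big1_eq mulr0.
  move=> t rt _; case: ifP => // /andP[_ /asboolP xtx].
  by case/negP: xs; rewrite -xtx; apply: s_xt.
rewrite -big_filter (@eq_in_filter _ _ predT) ?filter_predT => [|x xs]; last first.
  by apply/mem_set/sA.
under eq_bigr do rewrite big_mkcondr mulr_sumr.
rewrite exchange_big; apply: eq_bigr_In => t rt _.
rewrite (bigD1_seq (xt t)) ?undup_uniq ?s_xt //= asboolT // big1 ?addr0 1?mulrC //.
by move=> x /negbTE xtx; rewrite asboolF ?mulr0 // => /eqP; rewrite eq_sym xtx.
Qed.

Section SingletonEAMS.
Variables (Atom : Type) (Var : choiceType).

Lemma restrict_eval (V : set Var) (D : set real) (nu : evaluation Var) :
  is_eval V D nu -> restrict nu V = nu.
Proof.
move=> evalV; apply/funext => x; rewrite /restrict.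
by case: asboolP => // Vx; rewrite (proj2 (evalV x)).
Qed.

Lemma emodel_Int (T : emodule Atom Var) I nu :
  Int (voc T) (vars T) (dom T) I nu -> emodel T I nu = sem T I nu.
Proof. by case=> IT evalT; rewrite /emodel (setIidl IT) (restrict_eval evalT). Qed.

Lemma emodel_H1 (T : emodule Atom Var) I nu :
  emodel_H [:: T] I nu <-> Int (voc T) (vars T) (dom T) I nu /\ sem T I nu.
Proof.
have union1 U (F : emodule Atom Var -> set U) :
    (fun u => exists T', List.In T' [:: T] /\ F T' u) = F T.
  apply/funext => u; apply/propext.
  by split=> [[T' [[<-|[]]]]|FTu] //; exists T; split=> //; left.
rewrite /emodel_H /voc_H /vars_H /dom_H !union1; split=> -[IntT semT].
  by split=> //; rewrite -emodel_Int //; apply: semT; left.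
by split=> // T' [<-|[]]; rewrite emodel_Int.
Qed.

End SingletonEAMS.

Section MinimizeStatementSystem.
Variables (Atom : Type) (Var : choiceType) (sigma sigmac : set Atom) (V : set Var)
  (D : set real) (gamma : Atom -> constraint Var) (P' : program Atom)
  (ms : seq (min_elem Var)).

Local Notation W := (W_of sigma sigmac V D gamma P' ms).

Lemma At_sub_voc : cas_program sigma sigmac P' -> At P' `<=` sigma.
Proof.
move=> casP a [r [P'r r_a]]; have [[head_r [pos_r neg_r]] _] := casP r P'r.
by case: r_a => [/head_r|[/pos_r|/neg_r]].
Qed.

Lemma emodel_W_of I nu : cas_program sigma sigmac P' ->
  emodel_W W I nu <-> cas_ext_answer_set sigma sigmac V D gamma P' I nu.
Proof.
move=> casP; rewrite /emodel_W emodel_H1; split=> [[]//|ans]; split=> //.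
have [[IAt _ _ _] evalV _] := ans.
by split=> // a /IAt /(At_sub_voc casP).
Qed.

Lemma T_sVD_cond_cost I nu w c l : Int sigma V D I nu ->
  cost_cond (EWCond (T_sVD sigma V D) w c l) I +
  ecost_cond (EWCond (T_sVD sigma V D) w c l) I nu =
  w%:~R + \sum_(x \in V) odflt 0 (nu x) * c x.
Proof.
move=> IntI; have modelT : emodel (T_sVD sigma V D) I nu by rewrite emodel_Int.
rewrite /cost_cond /ecost_cond !asboolT //.
by exists V, D, nu; split=> //; case: IntI.
Qed.

Lemma Sigma_split nu l : Sigma ms nu l =
  (w_lev ms l)%:~R + \sum_(m <- ms | m_l m == l) (m_b m)%:~R * odflt 0 (nu (m_x m)).
Proof. by rewrite /Sigma big_split addrC /w_lev rmorph_sum. Qed.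

Lemma fsum_c_lev nu l : (forall m, List.In m ms -> V (m_x m)) ->
  \sum_(x \in V) odflt 0 (nu x) * c_lev ms l x =
  \sum_(m <- ms | m_l m == l) (m_b m)%:~R * odflt 0 (nu (m_x m)).
Proof. by move=> msV; rewrite /c_lev fsum_mul_occurrences. Qed.

Lemma sum_Sigma_levels nu l :
  \sum_(l0 <- undup [seq m_l m | m <- ms] | l0 == l) Sigma ms nu l0 = Sigma ms nu l.
Proof.
have [msl|no_msl] := boolP (l \in [seq m_l m | m <- ms]).
  rewrite -big_filter (eq_filter (a2 := pred1 l)) // filter_pred1_uniq.
  - by rewrite big_seq1.
  - exact: undup_uniq.
  - by rewrite mem_undup.
rewrite big1_seq => [|l0 /andP[/eqP-> msl]]; last first.
  by move: msl; rewrite mem_undup (negbTE no_msl).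
rewrite /Sigma big_hasC //; apply: contra no_msl => has_l.
by rewrite -has_pred1 has_map.
Qed.

Lemma ecost_W_of I nu l : (forall m, List.In m ms -> V (m_x m)) ->
  Int sigma V D I nu -> ecost W l I nu = Sigma ms nu l.
Proof.
move=> msV IntI; have level_cost l0 :
    \sum_(B <- [:: EWCond (T_sVD sigma V D) (w_lev ms l0) (fun=> 0) l0;
                   EWCond (T_sVD sigma V D) 0 (c_lev ms l0) l0] | ew_lev B == l)
      (cost_cond B I + ecost_cond B I nu) = if l0 == l then Sigma ms nu l0 else 0.
  rewrite !big_cons big_nil /=; case: eqP => // _.
  rewrite !T_sVD_cond_cost // fsbig1 => [|x _]; last by rewrite mulr0.
  by rewrite fsum_c_lev // Sigma_split addr0 add0r addr0.
rewrite /ecost /= /S_of big_flatten big_map /=.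
by rewrite (eq_bigr _ (fun l0 _ => level_cost l0)) -big_mkcond sum_Sigma_levels.
Qed.


Lemma mem_levels_W_of l :
  (l \in levels W) = (l \in [seq m_l m | m <- ms]).
Proof.
rewrite /levels mem_sort mem_undup /= /S_of map_flatten -map_comp.
apply/flatten_mapP/idP => [[l0 msl0]|msl]; last by exists l; rewrite ?mem_undup ?inE ?eqxx.
by rewrite /= !inE orbb => /eqP->; rewrite -mem_undup.
Qed.

Lemma lex_lt_Sigma_dominates (I' I : set Atom) nu' nu :
  lex_lt (fun l (_ : set Atom) nu => Sigma ms nu l) (levels W) I' nu' I nu <->
  dominates ms nu' nu.
Proof.
rewrite lex_ltP; last by apply: sort_sorted => m n; apply: leq_total.
split=> -[l [Wl agree lt_l]]; exists l.
  split; rewrite -?mem_levels_W_of // => l' Wl' lt'.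
  by rewrite agree ?mem_levels_W_of.
split; rewrite ?mem_levels_W_of // => l' Wl' lt'.
by rewrite agree -?mem_levels_W_of.
Qed.

End MinimizeStatementSystem.

Theorem proposition3 (Atom : Type) (Var : choiceType)
  (sigma sigmac : set Atom) (V : set Var) (D : set real)
  (C : set (constraint Var)) (gamma : Atom -> constraint Var)
  (P' : program Atom) (ms : seq (min_elem Var)) :
  sigmac `<=` sigma ->
  class_over V D C ->
  denotation sigmac C gamma ->
  cas_program sigma sigmac P' ->
  min_wf V ms ->
  forall (X : set Atom) (nu : evaluation Var),
    Int sigma V D X nu ->
    (minopt_ext (W_of sigma sigmac V D gamma P' ms) X nu <->
     optimal_ext_answer_set sigma sigmac V D gamma P' ms X nu).
Proof.
move=> _ _ _ casP [msV _] X nu _.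
set W := W_of sigma sigmac V D gamma P' ms.
have modelP I nu' : emodel_W W I nu' <-> cas_ext_answer_set sigma sigmac V D gamma P' I nu'.
  exact: emodel_W_of.
have lexP I' nu' I nu'' : emodel_W W I' nu' -> emodel_W W I nu'' ->
    lex_lt (ecost W) (levels W) I' nu' I nu'' <-> dominates ms nu' nu''.
  move=> /emodel_H1[Int' _] /emodel_H1[Int _].
  rewrite (eq_lex_lt (g := fun l _ nu => Sigma ms nu l)) => [|l|l].
  - exact: lex_lt_Sigma_dominates.
  - by apply: ecost_W_of => // m /msV[].
  - by apply: ecost_W_of => // m /msV[].
rewrite minopt_ext_lexP; split=> [[WX lexmin]|[ansX nodom]].
  split=> [|[X' [nu' [ans' dom]]]]; first exact/modelP.
  have WX' := (modelP _ _).2 ans'.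
  by apply: (lexmin _ _ WX'); apply/lexP.
have WX := (modelP _ _).2 ansX; split=> // X' nu' WX' /(lexP _ _ _ _ WX' WX) dom.
by apply: nodom; exists X', nu'; split=> //; apply/modelP.
Qed.
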